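(* Let $\mathcal A$ be a transitive Lie algebroid with kernel $\mathcal L$, let $\phi:\mathcal A\to\mathfrak D(E)$ be a representation of $\mathcal A$ on a vector bundle $E\to M$ and $\phi_{\mathcal L}=\phi\circ\iota$. Let $\widehat\omega\in\Omega^1(\mathcal A,\mathcal L)$ be a (generalized) connection with reduced kernel endomorphism $\tau$, $\mathring\omega$ a background ordinary connection, and $\omega=\widehat\omega+\tau\circ\mathring\omega$ the induced ordinary connection with splitting $\nabla$; let $\widehat C(X)=X+\iota\widehat\omega(X)$. Then $\varphi\mapsto\widehat\nabla^E\varphi$, $(\widehat\nabla^E\varphi)(X)=\phi(\widehat C(X))\varphi$, defines a covariant derivative $\widehat\nabla^E:\Gamma(E)\to\Omega^1(\mathcal A,E)$ (i.e. $C^\infty(M)$-linear in $X$ and $\widehat\nabla^E_X(f\varphi)=f\widehat\nabla^E_X\varphi+(\rho(X)f)\varphi$), and $$(\widehat\nabla^E\varphi)(X)=\phi(\nabla_{\rho(X)})\varphi-\phi_{\mathcal L}\big(\tau(\mathring\omega(X))\big)\varphi\qquad(X\in\mathcal A).$$ Moreover, under an infinitesimal gauge transformation by $\xi\in\mathcal L$ ($\widehat\omega\mapsto\widehat\omega^\xi$, $\varphi\mapsto\varphi-\phi_{\mathcal L}(\xi)\varphi$, $\mathring\omega$ fixed), each of the two terms $T$ on the right-hand side transforms homogeneously, $T\mapsto T-\phi_{\mathcal L}(\xi)T$ to first order in $\xi$.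
   Context: A transitive Lie algebroid over $M$: finitely generated projective $C^\infty(M)$-module $\mathcal A$ with Lie bracket and surjective $C^\infty(M)$-linear Lie morphism $\rho:\mathcal A\to\Gamma(TM)$, $[X,fY]=f[X,Y]+(\rho(X)f)Y$; kernel $\mathcal L=\ker\rho$, inclusion $\iota$. $\mathfrak D(E)$ is the Lie algebra of first-order differential operators $D$ on $\Gamma(E)$ whose symbol is scalar, i.e. $D(f\varphi)=fD\varphi+(X_D f)\varphi$ for a vector field $X_D$. A representation of $\mathcal A$ on $E$ is a $C^\infty(M)$-linear Lie algebra morphism $\phi:\mathcal A\to\mathfrak D(E)$ with $X_{\phi(X)}=\rho(X)$; then $\phi_{\mathcal L}=\phi\circ\iota$ takes values in $\Gamma(\mathrm{End}E)$. $\Omega^1(\mathcal A,E)$: $C^\infty(M)$-linear maps $\mathcal A\to\Gamma(E)$. A (generalized) connection is any $\widehat\omega\in\Omega^1(\mathcal A,\mathcal L)$ ($C^\infty(M)$-linear $\mathcal A\to\mathcal L$); infinitesimal gauge transformation: $\widehat\omega^\xi(X)=\widehat\omega(X)+[X,\iota\xi]+[\widehat\omega(X),\xi]$. Reduced kernel endomorphism $\tau=\widehat\omega\circ\iota+\mathrm{Id}_{\mathcal L}$, transforming as $\tau\mapsto\tau+[\tau,\xi]$. An ordinary connection is a $C^\infty(M)$-linear splitting $\nabla$ of $\rho$, with 1-form $\omega$ given by $X=\nabla_{\rho X}-\iota\omega(X)$; a background connection $\mathring\omega$ is such a 1-form, and $\widehat\omega+\tau\circ\mathring\omega$ is then an ordinary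 connection. *)

(* Algebraic (Lie--Rinehart / Serre--Swan) rendering of
   transitive Lie algebroids: C^oo(M) is an abstract commutative k-algebra R,
   Gamma(TM) = k-derivations of R, Gamma(E) and A are f.g. projective R-modules,
   the kernel L = ker rho is taken literally as a subset of A (iota = inclusion). *)
From HB Require Import structures.
From mathcomp Require Import all_boot all_order all_algebra.
Set Implicit Arguments. Unset Strict Implicit. Unset Printing Implicit Defensive.
Import GRing.Theory.
Local Open Scope ring_scope.

Section LieAlgebroids.
Variables (k : fieldType) (R : comAlgType k).

(* Vector fields on M = k-derivations of C^oo(M) = R. *)
Definition is_derivation (D : R -> R) : Prop :=
  [/\ forall f g, D (f + g) = D f + D g,
      forall (c : k) f, D (c *: f) = c *: D f
    & forall f g, D (f * g) = D f * g + f * D g].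

Definition fg_projective (V : lmodType R) : Prop :=
  exists (n : nat) (i : V -> 'rV[R]_n) (p : 'rV[R]_n -> V),
    [/\ forall (a : R) u v, i (a *: u + v) = a *: i u + i v,
        forall (a : R) u v, p (a *: u + v) = a *: p u + p v
      & forall v, p (i v) = v].

Definition kscale (V : lmodType R) (c : k) (v : V) : V := (c%:A : R) *: v.

Definition transitive_Lie_algebroid (A : lmodType R) (br : A -> A -> A)
  (rho : A -> R -> R) : Prop :=
  [/\ fg_projective A,
      [/\ forall X Y Z, br (X + Y) Z = br X Z + br Y Z,
          forall (c : k) X Y, br (kscale c X) Y = kscale c (br X Y),
          forall X Y, br X Y = - br Y X
        & forall X Y Z, br X (br Y Z) + br Y (br Z X) + br Z (br X Y) = 0],
      (forall X, is_derivation (rho X)) /\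
      (forall (f : R) X Y g, rho (f *: X + Y) g = f * rho X g + rho Y g),
      (forall X Y g, rho (br X Y) g = rho X (rho Y g) - rho Y (rho X g)) /\
      (forall X (f : R) Y, br X (f *: Y) = f *: br X Y + rho X f *: Y)
    &
      forall D, is_derivation D -> exists X, forall g, rho X g = D g].

(* first-order differential operator on Gamma(E) with scalar symbol XD *)
Definition first_order_op (V : lmodType R) (XD : R -> R) (D : V -> V) : Prop :=
  [/\ is_derivation XD,
      forall u v, D (u + v) = D u + D v,
      forall (c : k) v, D (kscale c v) = kscale c (D v)
    & forall (f : R) v, D (f *: v) = f *: D v + XD f *: v].

Definition representation (A V : lmodType R) (br : A -> A -> A)
  (rho : A -> R -> R) (phi : A -> V -> V) : Prop :=
  [/\ forall X, first_order_op (rho X) (phi X),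
      forall (f : R) X Y v, phi (f *: X + Y) v = f *: phi X v + phi Y v
    & forall X Y v, phi (br X Y) v = phi X (phi Y v) - phi Y (phi X v)].

(* C^oo(M)-linear maps A -> W, i.e. elements of Omega^1(A, W) *)
Definition one_form (A W : lmodType R) (w : A -> W) : Prop :=
  forall (a : R) X Y, w (a *: X + Y) = a *: w X + w Y.

(* generalized connection: element of Omega^1(A, L), L = ker rho *)
Definition gen_connection (A : lmodType R) (rho : A -> R -> R) (omh : A -> A) :=
  one_form omh /\ forall X g, rho (omh X) g = 0.

(* reduced kernel endomorphism tau = omh o iota + Id_L (meaningful on L) *)
Definition tau (A : lmodType R) (omh : A -> A) (l : A) : A := omh l + l.

Definition splitting (A : lmodType R) (rho : A -> R -> R)
  (nab : (R -> R) -> A) : Prop :=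
  (forall D, is_derivation D -> forall g, rho (nab D) g = D g) /\
  (forall (f : R) D D', is_derivation D -> is_derivation D' ->
     nab (fun g => f * D g + D' g) = f *: nab D + nab D').

Definition connection_form (A : lmodType R) (rho : A -> R -> R)
  (nab : (R -> R) -> A) (w : A -> A) : Prop :=
  forall X, X = nab (rho X) - w X.

Definition hatC (A : lmodType R) (omh : A -> A) (X : A) : A := X + omh X.
Definition cov_deriv (A V : lmodType R) (phi : A -> V -> V) (omh : A -> A)
  (psi : V) (X : A) : V := phi (hatC omh X) psi.

Definition covariant_derivative (A V : lmodType R) (rho : A -> R -> R)
  (nE : V -> A -> V) : Prop :=
  (forall psi, one_form (nE psi)) /\
  (forall (f : R) psi X, nE (f *: psi) X = f *: nE psi X + rho X f *: psi).

Definition gauge (A : lmodType R) (br : A -> A -> A) (omh : A -> A) (xi : A)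
  (X : A) : A := omh X + br X xi + br (omh X) xi.

End LieAlgebroids.

(* Since [nab] splits the ordinary connection [omh + tau o omr], one has
   [nab_(rho X) = X + omh X + tau (omr X)], i.e. [hatC X = nab_(rho X) - tau (omr X)],
   which gives the formula; covariance of [hatC] follows from [rho o omh = 0].
   Under an infinitesimal gauge transformation by [xi] both [tau] and
   [nab_(rho X)] move by a bracket with [xi], N |-> N + [N, xi], and since [phi]
   is a Lie morphism, [phi (N + [N, xi]) (psi - phi xi psi)] equals
   [phi N psi - phi xi (phi N psi)] up to the quadratic term
   [- phi [N, xi] (phi xi psi)]. *)
From HB Require Import structures.
From mathcomp Require Import all_boot all_order all_algebra.
Import GRing.Theory.
Set Implicit Arguments. Unset Strict Implicit. Unset Printing Implicit Defensive.
Local Open Scope ring_scope.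

Section OneForm.
Variables (k : fieldType) (R : comAlgType k) (A W : lmodType R) (w : A -> W).
Hypothesis w_lin : one_form w.

Lemma one_formD X Y : w (X + Y) = w X + w Y.
Proof. by have := w_lin 1 X Y; rewrite !scale1r. Qed.

Lemma one_form0 : w 0 = 0.
Proof. by apply: (addrI (w 0)); rewrite -one_formD !addr0. Qed.

Lemma one_formZ (a : R) X : w (a *: X) = a *: w X.
Proof. by rewrite -[a *: X]addr0 w_lin one_form0 addr0. Qed.

Lemma one_formB X Y : w (X - Y) = w X - w Y.
Proof. by rewrite -scaleN1r addrC w_lin scaleN1r addrC. Qed.

End OneForm.

Section FirstOrderOp.
Variables (k : fieldType) (R : comAlgType k) (V : lmodType R).
Variables (XD : R -> R) (D : V -> V).
Hypothesis D_op : first_order_op XD D.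

Lemma first_order_opB u v : D (u - v) = D u - D v.
Proof.
have [_ D_add D_kscale _] := D_op.
by have := D_kscale (-1) v; rewrite /kscale !scaleN1r D_add => ->.
Qed.

End FirstOrderOp.

Lemma kscale_comp (k : fieldType) (R : comAlgType k) (V : lmodType R)
    (c d : k) (v : V) :
  kscale c (kscale d v) = kscale (c * d) v.
Proof. by rewrite /kscale scalerA -scalerAl mul1r scalerA. Qed.

Section Connections.
Variables (k : fieldType) (R : comAlgType k) (A : lmodType R).
Variables (br : A -> A -> A) (rho : A -> R -> R).
Hypothesis brDl : forall X Y Z, br (X + Y) Z = br X Z + br Y Z.

Lemma connection_formE (nab : (R -> R) -> A) (w : A -> A) :
  connection_form rho nab w -> forall X, nab (rho X) = X + w X.
Proof. by move=> wE X; rewrite {2}(wE X) subrK. Qed.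

Lemma tau_gauge (omh : A -> A) xi l :
  tau (gauge br omh xi) l = tau omh l + br (tau omh l) xi.
Proof.
rewrite /tau /gauge brDl -!addrA; congr (_ + _).
by rewrite addrA [RHS]addrC (addrC (br l xi)).
Qed.

Lemma connection_form_gauge (omh omr : A -> A) (nab nab' : (R -> R) -> A) xi X :
  connection_form rho nab (fun X => omh X + tau omh (omr X)) ->
  connection_form rho nab'
    (fun X => gauge br omh xi X + tau (gauge br omh xi) (omr X)) ->
  nab' (rho X) = nab (rho X) + br (nab (rho X)) xi.
Proof.
move=> /connection_formE-> /connection_formE->.
rewrite tau_gauge /gauge; move: (tau omh (omr X)) => T.
rewrite !brDl -!addrA; congr (_ + (_ + _)).
by rewrite (addrCA (br (omh X) xi) T) (addrCA (br X xi) T).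
Qed.

End Connections.

Section Representation.
Variables (k : fieldType) (R : comAlgType k) (A V : lmodType R).
Variables (br : A -> A -> A) (rho : A -> R -> R) (phi : A -> V -> V).
Hypothesis phi_rep : representation br rho phi.

Lemma representation_one_form v : one_form (phi^~ v).
Proof. by case: phi_rep => _ phiL _ a X Y; apply: phiL. Qed.

Lemma representationB X u v : phi X (u - v) = phi X u - phi X v.
Proof. by case: phi_rep => phi_op _ _; rewrite (first_order_opB (phi_op X)). Qed.

Lemma representation_gauge N eta psi :
  phi (N + br N eta) (psi - phi eta psi)
  = phi N psi - phi eta (phi N psi) - phi (br N eta) (phi eta psi).
Proof.
have [_ _ phiB] := phi_rep.
rewrite (one_formD (representation_one_form _)) !representationB phiB.
by rewrite !addrA subrK.
Qed.

Lemma representation_kscalel c X v : phi (kscale c X) v = kscale c (phi X v).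
Proof. exact: one_formZ (representation_one_form v) _ _. Qed.

Lemma representation_kscaler c X v : phi X (kscale c v) = kscale c (phi X v).
Proof. by case: phi_rep => phi_op _ _; have [_ _ -> _] := phi_op X. Qed.

Lemma cov_derivE (omh omr : A -> A) (nab : (R -> R) -> A) psi X :
  connection_form rho nab (fun X => omh X + tau omh (omr X)) ->
  cov_deriv phi omh psi X = phi (nab (rho X)) psi - phi (tau omh (omr X)) psi.
Proof.
move=> /connection_formE->.
by rewrite -(one_formB (representation_one_form psi)) addrA addrK.
Qed.

Lemma cov_deriv_covariant (omh : A -> A) :
  (forall (f : R) X Y g, rho (f *: X + Y) g = f * rho X g + rho Y g) ->
  gen_connection rho omh -> covariant_derivative rho (cov_deriv phi omh).
Proof.
move=> rhoL [omhL omh_vert]; have [phi_op _ _] := phi_rep.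
split=> [psi a X Y | f psi X]; rewrite /cov_deriv /hatC.
  by rewrite omhL addrACA -scalerDr; apply: representation_one_form.
have [_ _ _ ->] := phi_op (X + omh X).
by have := rhoL 1 X (omh X) f; rewrite scale1r mul1r omh_vert addr0 => ->.
Qed.

Hypothesis brZl : forall (c : k) X Y, br (kscale c X) Y = kscale c (br X Y).
Hypothesis br_antisym : forall X Y, br X Y = - br Y X.

Lemma br_kscaler c X Y : br X (kscale c Y) = kscale c (br X Y).
Proof. by rewrite br_antisym brZl [br Y X]br_antisym /kscale scalerN opprK. Qed.

Lemma representation_gauge_kscale t xi N psi :
  phi (N + br N (kscale t xi)) (psi - phi (kscale t xi) psi)
  = phi N psi - phi (kscale t xi) (phi N psi)
    + kscale (t ^+ 2) (- phi (br N xi) (phi xi psi)).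
Proof.
rewrite representation_gauge br_kscaler !representation_kscalel.
by rewrite representation_kscaler kscale_comp -expr2 /kscale scalerN.
Qed.

End Representation.

Unset Implicit Arguments.

Theorem proposition3p8 (k : fieldType) (R : comAlgType k) (A V : lmodType R)
  (br : A -> A -> A) (rho : A -> R -> R) (phi : A -> V -> V)
  (omh omr : A -> A) (nab nabr : (R -> R) -> A) :
  transitive_Lie_algebroid br rho ->
  fg_projective V ->
  representation br rho phi ->
  gen_connection rho omh ->
  (* background ordinary connection omr, with splitting nabr *)
  splitting rho nabr -> connection_form rho nabr omr ->
  (* nab : splitting of the induced ordinary connection omh + tau o omr *)
  splitting rho nab -> connection_form rho nab (fun X => omh X + tau omh (omr X)) ->
  [/\ covariant_derivative rho (cov_deriv phi omh),
      (forall psi X, cov_deriv phi omh psi X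
                     = phi (nab (rho X)) psi - phi (tau omh (omr X)) psi)
    & forall xi : A, (forall g, rho xi g = 0) ->
      forall nabt : k -> (R -> R) -> A,
      (forall t : k, splitting rho (nabt t) /\
         connection_form rho (nabt t)
           (fun X => gauge br omh (kscale t xi) X
                     + tau (gauge br omh (kscale t xi)) (omr X))) ->
      forall (psi : V) (X : A), exists Q1 Q2 : V, forall t : k,
        let xit := kscale t xi in
        let psit := psi - phi xit psi in
        let T1 := phi (nab (rho X)) psi in
        let T2 := phi (tau omh (omr X)) psi in
        phi (nabt t (rho X)) psit = T1 - phi xit T1 + kscale (t ^+ 2) Q1 /\
        phi (tau (gauge br omh xit) (omr X)) psit
          = T2 - phi xit T2 + kscale (t ^+ 2) Q2].
Proof.
move=> [_ [brDl brZl br_antisym _] [_ rhoL] _ _] _ phi_rep omh_conn _ _ _ nabE.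
split.
- exact (cov_deriv_covariant phi_rep rhoL omh_conn).
- by move=> psi X; exact (cov_derivE phi_rep psi X nabE).
move=> xi _ nabt nabtE psi X.
exists (- phi (br (nab (rho X)) xi) (phi xi psi)).
exists (- phi (br (tau omh (omr X)) xi) (phi xi psi)) => t /=.
rewrite (connection_form_gauge brDl X nabE (nabtE t).2) tau_gauge //.
by split; apply: (representation_gauge_kscale phi_rep brZl br_antisym).
Qed.
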